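(* Consider a Boolean control network in algebraic form $$\mathbf{x}(t+1)=L\ltimes \mathbf{u}(t)\ltimes \mathbf{x}(t),\qquad \mathbf{y}(t)=H\mathbf{x}(t),\qquad t\in\mathbb{Z}_+,$$ with $\mathbf{x}(t)\in\mathcal{L}_N$, $\mathbf{u}(t)\in\mathcal{L}_M$, $\mathbf{y}(t)\in\mathcal{L}_P$, $L\in\mathcal{L}_{N\times NM}$, $H\in\mathcal{L}_{P\times N}$, and let $\{\mathbf{y}_r(t)\}_{t=1}^T$, $\mathbf{y}_r(t)\in\mathcal{L}_P$, be a finite-length reference output trajectory. Let $\mathcal{X}_1$ be the set of initial states $\mathbf{x}_1$ of all state trajectories $\{\mathbf{x}_t\}_{t=1}^T$ generated by the network (i.e. $\mathbf{x}_{t+1}=L\ltimes\mathbf{u}_t\ltimes\mathbf{x}_t$ for some $\mathbf{u}_t\in\mathcal{L}_M$, $t\in[1,T-1]$) that are compatible with the reference, i.e. $H\mathbf{x}_t=\mathbf{y}_r(t)$ for all $t\in[1,T]$. Then the following are equivalent: (i) the trajectory $\{\mathbf{y}_r(t)\}_{t=1}^T$ is trackable from every initial state $\mathbf{x}_0\in\mathcal{L}_N$; (ii) $\mathcal{X}_1\neq\emptyset$ and for every $\mathbf{x}_0\in\mathcal{L}_N$ there exists $\mathbf{u}\in\mathcal{L}_M$ such that $L\ltimes\mathbf{u}\ltimes\mathbf{x}_0\in\mathcal{X}_1$.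
   Context: $\delta_k^i$ denotes the $i$-th canonical vector of $\mathbb{R}^k$; $\mathcal{L}_k$ is the set of canonical vectors of $\mathbb{R}^k$, and $\mathcal{L}_{k\times q}$ the set of $k\times q$ matrices whose columns are in $\mathcal{L}_k$. $N=2^n$, $M=2^m$, $P=2^p$. Writing $L=[L_1\,|\,L_2\,|\,\cdots\,|\,L_M]$ with $L_i\in\mathcal{L}_{N\times N}$, the semi-tensor product satisfies $L\ltimes\delta_M^i\ltimes\mathbf{x}=L_i\mathbf{x}$ for $\mathbf{x}\in\mathcal{L}_N$. For $k\ge1$, $\mathbf{y}(k,\mathbf{x}(0),\{\mathbf{u}(t)\}_{t=0}^{k-1})$ denotes the output at time $k$ obtained from initial state $\mathbf{x}(0)$ applying inputs $\mathbf{u}(0),\dots,\mathbf{u}(k-1)$. The trajectory $\{\mathbf{y}_r(t)\}_{t=1}^T$ is trackable from $\mathbf{x}_0$ if there exist $\mathbf{u}(0),\dots,\mathbf{u}(T-1)\in\mathcal{L}_M$ such that $\mathbf{y}(t,\mathbf{x}_0,\{\mathbf{u}(\tau)\}_{\tau=0}^{t-1})=\mathbf{y}_r(t)$ for all $t\in[1,T]$. *)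

From HB Require Import structures.
From mathcomp Require Import all_boot all_order all_algebra.
Set Implicit Arguments. Unset Strict Implicit. Unset Printing Implicit Defensive.
Import Order.TTheory GRing.Theory Num.Theory.
Local Open Scope ring_scope.

Definition is_canon (R : numFieldType) (k : nat) (v : 'cV[R]_k) : Prop :=
  exists i : 'I_k, v = delta_mx i 0.

Definition is_logical (R : numFieldType) (k q : nat) (A : 'M[R]_(k, q)) : Prop :=
  forall j : 'I_q, is_canon (col j A).

(* The i-th N x N block L_i of L = [L_1 | ... | L_M] (0-indexed i). *)
Definition Lblock (R : numFieldType) (N M : nat) (L : 'M[R]_(N, N * M)) (i : 'I_M)
  : 'M[R]_N :=
  \matrix_(r < N, c < N) L r (cast_ord (mulnC M N) (mxvec_index i c)).

(* Semi-tensor product L |x u |x x = L (u (x) x) = sum_i u_i L_i x. *)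
Definition stp (R : numFieldType) (N M : nat) (L : 'M[R]_(N, N * M))
  (u : 'cV[R]_M) (x : 'cV[R]_N) : 'cV[R]_N :=
  \sum_(i < M) u i 0 *: (Lblock L i *m x).

Fixpoint traj (R : numFieldType) (N M : nat) (L : 'M[R]_(N, N * M))
  (x0 : 'cV[R]_N) (us : nat -> 'cV[R]_M) (t : nat) : 'cV[R]_N :=
  match t with
  | 0 => x0
  | t'.+1 => stp L (us t') (traj L x0 us t')
  end.

Definition output (R : numFieldType) (N M P : nat) (L : 'M[R]_(N, N * M))
  (H : 'M[R]_(P, N)) (x0 : 'cV[R]_N) (us : nat -> 'cV[R]_M) (t : nat) : 'cV[R]_P :=
  H *m traj L x0 us t.

Definition trackable (R : numFieldType) (N M P : nat) (L : 'M[R]_(N, N * M))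
  (H : 'M[R]_(P, N)) (T : nat) (yr : nat -> 'cV[R]_P) (x0 : 'cV[R]_N) : Prop :=
  exists us : nat -> 'cV[R]_M,
    (forall t, (t < T)%N -> is_canon (us t)) /\
    (forall t, (1 <= t <= T)%N -> output L H x0 us t = yr t).

Definition X1 (R : numFieldType) (N M P : nat) (L : 'M[R]_(N, N * M))
  (H : 'M[R]_(P, N)) (T : nat) (yr : nat -> 'cV[R]_P) (x1 : 'cV[R]_N) : Prop :=
  exists xs : nat -> 'cV[R]_N,
    xs 1%N = x1 /\
    (forall t, (1 <= t <= T)%N -> is_canon (xs t)) /\
    (forall t, (1 <= t < T)%N ->
        exists u : 'cV[R]_M, is_canon u /\ xs t.+1 = stp L u (xs t)) /\
    (forall t, (1 <= t <= T)%N -> H *m xs t = yr t).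

From mathcomp Require Import all_boot all_order all_algebra.
Set Implicit Arguments. Unset Strict Implicit. Unset Printing Implicit Defensive.
Import Order.TTheory GRing.Theory Num.Theory.
Local Open Scope ring_scope.

(* A run tracking the reference from x0 passes, after its first input, through
   a state of X1, since its own states form a compatible trajectory; conversely,
   if one input brings x0 into X1, following the compatible trajectory from
   there tracks the reference, the inputs realising its steps being chosen over
   the finite set of canonical inputs. *)

Section Dynamics.

Variables (R : numFieldType) (N M : nat) (L : 'M[R]_(N, N * M)).

Lemma stp_delta (i : 'I_M) (x : 'cV[R]_N) :
  stp L (delta_mx i 0) x = Lblock L i *m x.
Proof.
rewrite /stp (bigD1 i) //= big1 ?addr0; first by rewrite mxE !eqxx scale1r.
by move=> k /negbTE nki; rewrite mxE nki scale0r.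
Qed.

Hypothesis logL : is_logical L.

Lemma stp_canon (u : 'cV[R]_M) (x : 'cV[R]_N) :
  is_canon u -> is_canon x -> is_canon (stp L u x).
Proof.
move=> [i ->] [j ->]; rewrite stp_delta -colE.
have [k colL] := logL (cast_ord (mulnC M N) (mxvec_index i j)).
by exists k; rewrite -colL; apply/matrixP => r c; rewrite !mxE.
Qed.

Lemma traj_canon (x0 : 'cV[R]_N) (us : nat -> 'cV[R]_M) (t : nat) :
  is_canon x0 -> (forall s, (s < t)%N -> is_canon (us s)) ->
  is_canon (traj L x0 us t).
Proof.
move=> cx0; elim: t => [//|t IH] cus /=.
by apply: stp_canon; [apply: cus | apply: IH => s /ltnW/cus].
Qed.

Lemma traj_of_steps (xs : nat -> 'cV[R]_N) (K : nat) :
  (forall t, (t < K)%N -> exists u, is_canon u /\ xs t.+1 = stp L u (xs t)) ->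
  exists us : nat -> 'cV[R]_M,
    (forall t, (t < K)%N -> is_canon (us t)) /\
    (forall t, (t <= K)%N -> traj L (xs 0%N) us t = xs t).
Proof.
move=> step.
pose us t : 'cV[R]_M :=
  if [pick i | xs t.+1 == stp L (delta_mx i 0) (xs t)] is Some i
  then delta_mx i 0 else 0.
have us_step t : (t < K)%N -> is_canon (us t) /\ xs t.+1 = stp L (us t) (xs t).
  move=> ltK; rewrite /us; case: pickP => [i /eqP e|none]; first by split; [exists i|].
  by have [_ [[i ->] e]] := step t ltK; move: (none i); rewrite e eqxx.
exists us; split=> [t /us_step[] //|].
elim=> [//|t IH] ltK /=.
by rewrite IH ?(ltnW ltK) //; case: (us_step t ltK).
Qed.

End Dynamics.

Section Tracking.

Variables (R : numFieldType) (N M P : nat) (L : 'M[R]_(N, N * M)).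
Variables (H : 'M[R]_(P, N)) (T : nat) (yr : nat -> 'cV[R]_P).
Hypothesis logL : is_logical L.

Lemma trackable_X1 (x0 : 'cV[R]_N) : (0 < M)%N ->
  is_canon x0 -> trackable L H T yr x0 ->
  exists u, is_canon u /\ X1 L H T yr (stp L u x0).
Proof.
move=> M_gt0 cx0 [us [cus out_us]].
case: T cus out_us => [|T'] cus out_us.
  (* For T = 0 every state lies in X1. *)
  exists (delta_mx (Ordinal M_gt0) 0); split; first by exists (Ordinal M_gt0).
  exists (fun=> stp L (delta_mx (Ordinal M_gt0) 0) x0).
  by split=> //; split; [|split] => -[].
exists (us 0%N); split; first exact: cus.
exists (traj L x0 us); do !split => //.
- move=> t /andP[_ leT]; apply: traj_canon => // s lt_st.
  exact: cus (leq_trans lt_st leT).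
- by move=> t /andP[_ ltT]; exists (us t); split; [apply: cus|].
Qed.

Lemma trackable_of_X1 (x0 : 'cV[R]_N) (u : 'cV[R]_M) :
  is_canon u -> X1 L H T yr (stp L u x0) -> trackable L H T yr x0.
Proof.
move=> cu [xs [xs1 [_ [step out_xs]]]].
pose xs' t := if t is 0%N then x0 else xs t.
have [|us [cus traj_us]] := traj_of_steps (L := L) (xs := xs') (K := T).
  by move=> -[_|t ltT]; [exists u; rewrite /= xs1 | apply: step].
exists us; split=> // -[//|t] tT.
by rewrite /output traj_us ?(andP tT).2 //; apply: out_xs.
Qed.

End Tracking.

Theorem theorem1 (R : numFieldType) (n m p : nat)
  (L : 'M[R]_(2 ^ n, 2 ^ n * 2 ^ m)) (H : 'M[R]_(2 ^ p, 2 ^ n))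
  (T : nat) (yr : nat -> 'cV[R]_(2 ^ p)) :
  is_logical L -> is_logical H ->
  (forall t, (1 <= t <= T)%N -> is_canon (yr t)) ->
  ((forall x0 : 'cV[R]_(2 ^ n), is_canon x0 -> trackable L H T yr x0) <->
   ((exists x1, X1 L H T yr x1) /\
    (forall x0 : 'cV[R]_(2 ^ n), is_canon x0 ->
       exists u : 'cV[R]_(2 ^ m), is_canon u /\ X1 L H T yr (stp L u x0)))).
Proof.
move=> logL _ _.
have M_gt0 : (0 < 2 ^ m)%N by rewrite expn_gt0.
split=> [track | [_ one_step] x0 cx0]; last first.
  by have [u [cu X1u]] := one_step x0 cx0; apply: trackable_of_X1 X1u.
have one_step x0 : is_canon x0 -> exists u, is_canon u /\ X1 L H T yr (stp L u x0).
  by move=> cx0; apply: trackable_X1 => //; apply: track.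
have n_gt0 : (0 < 2 ^ n)%N by rewrite expn_gt0.
have [|u [_ X1u]] := one_step (delta_mx (Ordinal n_gt0) 0).
  by exists (Ordinal n_gt0).
by split=> //; exists (stp L u (delta_mx (Ordinal n_gt0) 0)).
Qed.
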